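(* Let $q$ be a prime power and let $M$ be a $2\times 2$ matrix over $\mathbb{F}_{q^2}$ having a unique eigenvalue $c$, whose eigenspace is one-dimensional and generated by an eigenvector $u\in\mathbb{F}_{q^2}^2$ with $\langle u,u\rangle\neq 0$. Then $0\notin\mathrm{Num}'_0(M)$. If $q$ is even, then $\mathrm{Num}'_0(M)=\mathbb{F}_{q^2}^*$. If $q$ is odd, then $\sharp(\mathrm{Num}'_0(M))=(q^2-1)/2$.
   Context: The Hermitian form on $\mathbb{F}_{q^2}^n$ is $\langle u,v\rangle=\sum_i u_i^q v_i$. For an $n\times n$ matrix $M$ over $\mathbb{F}_{q^2}$ with $n\ge 2$, $\mathrm{Num}'_0(M)=\{\langle u,Mu\rangle: u\in\mathbb{F}_{q^2}^n\setminus\{0\},\ \langle u,u\rangle=0\}$. *)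

From HB Require Import structures.
From mathcomp Require Import all_boot all_order all_algebra all_field.
Set Implicit Arguments. Unset Strict Implicit. Unset Printing Implicit Defensive.
Import GRing.Theory.
Local Open Scope ring_scope.

(* Hermitian form on F^n (column vectors), F = F_{q^2}: <u,v> = sum_i u_i^q v_i *)
Definition herm (F : finFieldType) (q n : nat) (u v : 'cV[F]_n) : F :=
  \sum_(i < n) (u i 0) ^+ q * v i 0.

Definition Num0 (F : finFieldType) (q n : nat) (M : 'M[F]_n) : {set F} :=
  [set x | [exists u : 'cV[F]_n,
      [&& u != 0, herm q u u == 0 & herm q u (M *m u) == x]]].

Definition is_eigenvalue (F : fieldType) (n : nat) (M : 'M[F]_n) (c : F) : Prop :=
  exists2 v : 'cV[F]_n, v != 0 & M *m v = c *: v.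

(* Let a = <u,u> and v = (-u_1^q, u_0^q), so that <u,v> = <v,u> = 0 and <v,v> = a.
   Since c is the only eigenvalue and its eigenspace is spanned by u, M acts on the
   basis (u, v) as a shear: M v = b u + c v with b <> 0.  For w = s u + t v this gives
     <w,w> = (s^(q+1) + t^(q+1)) a   and   <w, M w> = c <w,w> + a b s^q t,
   so Num'_0(M) is a b T, where T is the set of products s^q t with s <> 0 and
   s^(q+1) + t^(q+1) = 0; then t <> 0 as well, whence 0 is not in T.
   For even q every z <> 0 lies in T, with s and t suitable powers of z.
   For odd q, z in T gives z^(q+1) = -n^2 with n = s^(q+1) in F_q^*, hence
   z^((q^2-1)/2) = (-1)^((q-1)/2), an equation with at most (q^2-1)/2 roots; conversely
   the (q^2-1)/2 distinct elements g^(2i+(q-1)/2), for g a generator of F^*, lie in T. *)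

From mathcomp Require Import all_boot all_algebra all_field cyclic.
From mathcomp Require Import ring zify.

Set Implicit Arguments.
Unset Strict Implicit.
Unset Printing Implicit Defensive.
Import GRing.Theory.
Local Open Scope ring_scope.

Lemma pnat_pchar_card (F : finFieldType) p n m :
  prime p -> #|F| = (p ^ n)%N -> [pchar F].-nat (p ^ m)%N.
Proof.
move=> p_pr cardF; have pF := card_finPcharP cardF p_pr.
by rewrite pnatX (eq_pnat _ (pcharf_eq pF)) pnat_id.
Qed.

Lemma odd_sqrn_sub1 n : odd n -> (n ^ 2 - 1 = n.+1 * n./2 * 2)%N.
Proof. by move=> n_odd; have := odd_double_half n; rewrite n_odd -muln2; nia. Qed.

Lemma finField_card_gt1 (F : finFieldType) : (1 < #|F|)%N.
Proof. by apply/card_gt1P; exists 0, 1; rewrite eq_sym oner_neq0. Qed.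

Lemma expf_card_pred (F : finFieldType) (z : F) : z != 0 -> z ^+ #|F|.-1 = 1.
Proof.
move=> z_neq0; apply: (mulIf z_neq0).
by rewrite mul1r -exprSr prednK ?expf_card // ltnW ?finField_card_gt1.
Qed.

Lemma finField_prim_root (F : finFieldType) : exists g : F, (#|F|.-1).-primitive_root g.
Proof.
pose rs := enum [pred z : F | z != 0].
have size_rs : size rs = #|F|.-1 by rewrite -cardE -(cardC1 0); apply: eq_card.
have rs_unity : all (#|F|.-1).-unity_root rs.
  by apply/allP => z; rewrite mem_enum unity_rootE => /expf_card_pred ->.
have n_gt0 : (0 < #|F|.-1)%N.
  by rewrite -ltnS prednK ?finField_card_gt1 // ltnW ?finField_card_gt1.
have /hasP [g _ g_prim] :=
  has_prim_root n_gt0 rs_unity (enum_uniq _) (eq_leq (esym size_rs)).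
by exists g.
Qed.

Lemma prim_root_expr_half (R : idomainType) n (g : R) :
  (n * 2).-primitive_root g -> g ^+ n = -1.
Proof.
move=> g_prim; have n_gt0 : (0 < n)%N.
  by have := prim_order_gt0 g_prim; rewrite muln2 double_gt0.
have gn_neq1 : g ^+ n != 1.
  by rewrite -(expr0 g) (eq_prim_root_expr g_prim) mod0n modn_small ?gtn_eqF // ltn_Pmulr.
have : (g ^+ n - 1) * (g ^+ n + 1) = 0.
  by rewrite -subr_sqr -exprM prim_expr_order // expr1n subrr.
by move/eqP; rewrite mulf_eq0 subr_eq0 (negbTE gn_neq1) addr_eq0 => /eqP.
Qed.

Lemma card_expr_eq_le (F : finFieldType) n (c : F) :
  (0 < n)%N -> (#|[set z : F | z ^+ n == c]| <= n)%N.
Proof.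
move=> n_gt0; rewrite cardE -ltnS -(size_XnsubC c n_gt0).
apply: max_poly_roots; rewrite ?enum_uniq //.
  by rewrite -size_poly_eq0 size_XnsubC.
by apply/allP => z; rewrite mem_enum inE rootE !hornerE subr_eq0.
Qed.

Lemma unique_eigenvalue_shear (F : fieldType) n (M : 'M[F]_n) (c a b : F)
    (u v : 'cV[F]_n) :
  (forall x, is_eigenvalue M x <-> x = c) ->
  (forall w, M *m w = c *: w <-> exists s, w = s *: u) ->
  (forall s, v != s *: u) ->
  M *m v = a *: u + b *: v -> a != 0 /\ b = c.
Proof.
move=> uniq_c eig_c v_notin Mv.
have Mu : M *m u = c *: u by apply/eig_c; exists 1; rewrite scale1r.
have b_eq_c : b = c.
  have [//|b_neq_c] := eqVneq b c; apply/uniq_c.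
  pose k := a / (b - c); exists (v + k *: u).
    by rewrite addr_eq0 -scaleNr; apply: v_notin.
  rewrite mulmxDr -scalemxAr Mv Mu; apply/matrixP => i j; rewrite !mxE /k.
  by field; rewrite subr_eq0.
split=> //; apply/eqP => a0; have [s vE] : exists s, v = s *: u.
  by apply/eig_c; rewrite Mv a0 b_eq_c scale0r add0r.
by move: (v_notin s); rewrite vE eqxx.
Qed.

Section HermitianPlane.

Variables (F : finFieldType) (q : nat).
Hypotheses (charFq : [pchar F].-nat q) (cardF : #|F| = (q ^ 2)%N).

Lemma q_gt0 : (0 < q)%N.
Proof. by case/andP: charFq. Qed.

Lemma q_gt1 : (1 < q)%N.
Proof. by have := finField_card_gt1 F; rewrite cardF; case: q q_gt0 => [|[]]. Qed.

Lemma frobK (x : F) : x ^+ q ^+ q = x.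
Proof. by rewrite -exprM mulnn -cardF expf_card. Qed.

Lemma hermDr n (x y z : 'cV[F]_n) : herm q x (y + z) = herm q x y + herm q x z.
Proof. by rewrite /herm -big_split; apply: eq_bigr => i _; rewrite mxE mulrDr. Qed.

Lemma hermZr n a (x y : 'cV[F]_n) : herm q x (a *: y) = a * herm q x y.
Proof. by rewrite /herm mulr_sumr; apply: eq_bigr => i _; rewrite mxE mulrCA. Qed.

Lemma herm0r n (x : 'cV[F]_n) : herm q x 0 = 0.
Proof. by rewrite /herm big1 // => i _; rewrite mxE mulr0. Qed.

Lemma hermDl n (x y z : 'cV[F]_n) : herm q (x + y) z = herm q x z + herm q y z.
Proof.
by rewrite /herm -big_split; apply: eq_bigr => i _; rewrite mxE exprDn_pchar // mulrDl.
Qed.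

Lemma hermZl n a (x y : 'cV[F]_n) : herm q (a *: x) y = a ^+ q * herm q x y.
Proof.
by rewrite /herm mulr_sumr; apply: eq_bigr => i _; rewrite mxE exprMn mulrA.
Qed.

Lemma hermC n (x y : 'cV[F]_n) : herm q y x = herm q x y ^+ q.
Proof.
have frobD a b : (a + b) ^+ q = a ^+ q + b ^+ q := exprDn_pchar a b charFq.
rewrite /herm (big_morph (fun t : F => t ^+ q) frobD (expr0n _ _)).
by rewrite eqn0Ngt q_gt0; apply: eq_bigr => i _; rewrite exprMn frobK mulrC.
Qed.

Lemma herm_col2 (x y : 'cV[F]_2) :
  herm q x y = x 0 0 ^+ q * y 0 0 + x 1 0 ^+ q * y 1 0.
Proof.
rewrite /herm !big_ord_recl big_ord0 addr0.
by have -> : lift ord0 ord0 = 1 :> 'I_2 by apply: val_inj.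
Qed.

Lemma herm_orth_comb n (u v : 'cV[F]_n) s t s' t' :
  herm q u v = 0 -> herm q v u = 0 -> herm q v v = herm q u u ->
  herm q (s *: u + t *: v) (s' *: u + t' *: v)
    = (s ^+ q * s' + t ^+ q * t') * herm q u u.
Proof.
move=> huv hvu hvv.
by rewrite hermDl !hermDr !hermZl !hermZr huv hvu hvv; ring.
Qed.

Definition hperp (u : 'cV[F]_2) : 'cV[F]_2 :=
  \col_i (if i == 0 then - u 1 0 ^+ q else u 0 0 ^+ q).

Lemma herm_hperpr u : herm q u (hperp u) = 0.
Proof. by rewrite herm_col2 !mxE /=; ring. Qed.

Lemma herm_hperpl u : herm q (hperp u) u = 0.
Proof. by rewrite hermC herm_hperpr expr0n eqn0Ngt q_gt0. Qed.

Lemma herm_hperp_hperp u : herm q (hperp u) (hperp u) = herm q u u.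
Proof. by rewrite !herm_col2 !mxE /= exprNn_pchar // !frobK; ring. Qed.

Lemma hperp_decomp u w : herm q u u != 0 ->
  w = (herm q u w / herm q u u) *: u + (herm q (hperp u) w / herm q u u) *: hperp u.
Proof.
rewrite herm_col2 => norm_neq0; apply/matrixP => i j; rewrite (ord1 j).
rewrite !herm_col2 !mxE /= exprNn_pchar // !frobK.
have [->|->] : i = 0 \/ i = 1 by case: i => [[|[|//]] ?]; [left|right]; apply: val_inj.
all: by rewrite /=; field.
Qed.

(* The values <w, N w> on the nonzero isotropic w = (s, t) for the nilpotent
   N = [[0, 1], [0, 0]]; an isotropic w = (0, t) is zero. *)
Definition isotropic_products : {set F} :=
  [set z | [exists s, exists t,
     [&& s != 0, s ^+ q * s + t ^+ q * t == 0 & z == s ^+ q * t]]].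

Lemma isotropic_productsP z :
  reflect (exists s t, [/\ s != 0, s ^+ q * s + t ^+ q * t = 0 & z = s ^+ q * t])
          (z \in isotropic_products).
Proof.
rewrite /isotropic_products inE; apply: (iffP existsP).
  by case=> s /existsP [t /and3P [? /eqP ? /eqP ?]]; exists s, t.
case=> s [t [? ? ?]]; exists s; apply/existsP; exists t.
by apply/and3P; split=> //; apply/eqP.
Qed.

Lemma normf_eq0 (s : F) : (s ^+ q * s == 0) = (s == 0).
Proof. by rewrite mulf_eq0 expf_eq0 q_gt0 orbb. Qed.

Lemma isotropic_eq0 (s t : F) :
  s ^+ q * s + t ^+ q * t = 0 -> (s == 0) = (t == 0).
Proof.
rewrite -(normf_eq0 s) -(normf_eq0 t) => iso; apply/eqP/eqP => [s0|t0].
  by move: iso; rewrite s0 add0r.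
by move: iso; rewrite t0 addr0.
Qed.

Lemma isotropic_products_neq0 : 0 \notin isotropic_products.
Proof.
apply/isotropic_productsP => -[s [t [s_neq0 iso /esym/eqP]]].
by rewrite mulf_eq0 expf_eq0 -(isotropic_eq0 iso) (negbTE s_neq0) andbF.
Qed.

Lemma isotropic_products_even : ~~ odd q -> isotropic_products = [set z | z != 0].
Proof.
move=> q_even; have char2 : 2 \in [pchar F].
  by apply: (pnatPpi charFq); rewrite mem_primes q_gt0 dvdn2 q_even.
have [k qE] : exists k, q = (2 * k + 2)%N.
  exists (q./2 - 1)%N; have := odd_double_half q; have := q_gt0.
  by rewrite (negbTE q_even) -muln2; lia.
apply/setP => z; rewrite [RHS]inE; apply/idP/idP => [|z_neq0].
  by apply: contraTneq => ->; apply: isotropic_products_neq0.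
have z_unit : z ^+ (4 * k * k + 8 * k + 3) = 1.
  by rewrite -(expf_card_pred z_neq0) cardF qE; congr (_ ^+ _); nia.
(* [x = w] mod [q - 1], so [z ^+ x] and [z ^+ w] have the same norm, and
   [q x + w = 1] mod [q ^ 2 - 1]. *)
pose w := k.+1; pose x := (w + (2 * k + 1) * k.+2)%N.
apply/isotropic_productsP; exists (z ^+ x), (z ^+ w); split.
- by rewrite expf_neq0.
- rewrite -!exprM -!exprD (_ : x * q + x = w * q + w + (4 * k * k + 8 * k + 3) * k.+2)%N.
    by rewrite exprD exprM z_unit expr1n mulr1 addrr_pchar2.
  by rewrite /x /w qE; ring.
- rewrite -!exprM -!exprD (_ : x * q + w = (4 * k * k + 8 * k + 3) * k.+2 + 1)%N.
    by rewrite exprD exprM z_unit expr1n mul1r expr1.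
  by rewrite /x /w qE; ring.
Qed.

Lemma isotropic_product_expr_half z : odd q -> z \in isotropic_products ->
  z ^+ ((q ^ 2 - 1) %/ 2) = (-1) ^+ q./2.
Proof.
move=> q_odd /isotropic_productsP [s [t [s_neq0 iso ->]]].
set n := s ^+ q * s.
have n_neq0 : n != 0 by rewrite normf_eq0.
have nq_n : n ^+ q = n by rewrite exprMn frobK mulrC.
have n_pow : n ^+ (q./2 * 2) = 1.
  apply: (mulIf n_neq0); rewrite mul1r -exprSr -[in RHS]nq_n; congr (_ ^+ _).
  by have := odd_double_half q; rewrite q_odd -muln2.
have tt : t ^+ q * t = - n by apply/eqP; rewrite -addr_eq0 addrC iso.
have norm_st : (s ^+ q * t) ^+ q.+1 = - n ^+ 2.
  rewrite exprSr exprMn frobK (_ : _ * _ = n * (t ^+ q * t)); last by rewrite /n; ring.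
  by rewrite tt mulrN expr2.
rewrite odd_sqrn_sub1 // mulnK // exprM norm_st [LHS]exprNn.
by rewrite -exprM mulnC n_pow mulr1.
Qed.

Lemma prim_root_isotropic_product g i : (q ^ 2 - 1).-primitive_root g -> odd q ->
  g ^+ (2 * i + q./2) \in isotropic_products.
Proof.
move=> g_prim q_odd; set r := q./2.
have qE : q = (2 * r + 1)%N.
  by have := odd_double_half q; rewrite q_odd -muln2 addnC mulnC.
have g_neq0 : g != 0 by rewrite (prim_root_eq0 g_prim) -lt0n (prim_order_gt0 g_prim).
rewrite odd_sqrn_sub1 // in g_prim.
have g_half : g ^+ (q.+1 * r) = -1 := prim_root_expr_half g_prim.
have g_order : g ^+ (q.+1 * r * 2) = 1 := prim_expr_order g_prim.
(* [t = z s^-q] for [z = g ^+ (2 i + r)] and [s = g ^+ i]. *)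
pose j := (i + r + 2 * r * q * i)%N.
apply/isotropic_productsP; exists (g ^+ i), (g ^+ j); split.
- by rewrite expf_neq0.
- rewrite -!exprM -!exprD (_ : j * q + j = i * q + i + q.+1 * r + q.+1 * r * 2 * (q * i))%N.
    rewrite [X in _ + X]exprD exprM g_order expr1n mulr1.
    by rewrite [X in _ + X]exprD g_half mulrN1 subrr.
  by rewrite /j; ring.
- rewrite -!exprM -!exprD (_ : i * q + j = 2 * i + r + q.+1 * r * 2 * i)%N.
    by rewrite [RHS]exprD exprM g_order expr1n mulr1.
  by rewrite /j qE; ring.
Qed.

Lemma card_isotropic_products_odd :
  odd q -> #|isotropic_products| = ((q ^ 2 - 1) %/ 2)%N.
Proof.
move=> q_odd; set mh := ((q ^ 2 - 1) %/ 2)%N.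
have [g g_prim] := finField_prim_root F; rewrite cardF -subn1 in g_prim.
have mh_gt0 : (0 < mh)%N.
  by rewrite /mh odd_sqrn_sub1 // mulnK // muln_gt0 half_gt0 q_gt1.
have twice_mh : (q ^ 2 - 1 = mh * 2)%N by rewrite /mh odd_sqrn_sub1 // mulnK.
(* Squeezed between the mh elements [g ^+ (2 i + q./2)] and the roots of
   [X ^+ mh - (-1) ^+ q./2]. *)
apply/eqP; rewrite eqn_leq; apply/andP; split.
  apply: leq_trans (card_expr_eq_le ((-1) ^+ q./2) mh_gt0); apply: subset_leq_card.
  by apply/subsetP => z /(isotropic_product_expr_half q_odd) zE; rewrite inE zE.
have inj_pow : injective (fun i : 'I_mh => g ^+ (2 * i + q./2)).
  move=> i j /eqP; rewrite (eq_prim_root_expr g_prim) eqn_modDr twice_mh.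
  have double_lt (k : 'I_mh) : (2 * k < mh * 2)%N by rewrite mulnC ltn_pmul2r ?ltn_ord.
  by rewrite !modn_small ?double_lt // => /eqP ij; apply: ord_inj; lia.
rewrite -{1}(card_ord mh) -(card_imset _ inj_pow); apply: subset_leq_card.
by apply/subsetP => _ /imsetP [i _ ->]; apply: prim_root_isotropic_product.
Qed.

Section ShearNumericalRange.

Variables (M : 'M[F]_2) (c : F) (u : 'cV[F]_2).
Hypotheses (uniq_c : forall x, is_eigenvalue M x <-> x = c)
  (eig_c : forall w, M *m w = c *: w <-> exists s, w = s *: u)
  (norm_u : herm q u u != 0).

Lemma Num0_isotropic_products :
  exists2 k : F, k != 0 & forall y, (y \in Num0 q M) = (y / k \in isotropic_products).
Proof.
set al := herm q u u; set v := hperp u.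
have huv : herm q u v = 0 := herm_hperpr u.
have hvu : herm q v u = 0 := herm_hperpl u.
have hvv : herm q v v = al := herm_hperp_hperp u.
have decomp w : w = (herm q u w / al) *: u + (herm q v w / al) *: v.
  exact: hperp_decomp.
have v_notin s : v != s *: u.
  by apply/eqP => vE; move: norm_u; rewrite -/al -hvv {2}vE hermZr hvu mulr0 eqxx.
set a := herm q u (M *m v) / al.
have [a_neq0 b_eq_c] :=
  unique_eigenvalue_shear uniq_c eig_c v_notin (decomp (M *m v)).
have Mu : M *m u = c *: u by apply/eig_c; exists 1; rewrite scale1r.
have Mw s t : M *m (s *: u + t *: v) = (s * c + t * a) *: u + (t * c) *: v.
  rewrite mulmxDr -!scalemxAr Mu {1}(decomp (M *m v)) -/a b_eq_c.
  by rewrite !scalerDr !scalerA addrA -scalerDl (mulrC t).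
have hww s t :
    herm q (s *: u + t *: v) (s *: u + t *: v) = (s ^+ q * s + t ^+ q * t) * al.
  exact: herm_orth_comb.
have hwMw s t : herm q (s *: u + t *: v) (M *m (s *: u + t *: v))
    = (c * (s ^+ q * s + t ^+ q * t) + a * s ^+ q * t) * al.
  by rewrite Mw herm_orth_comb //; congr (_ * _); ring.
exists (a * al); first by rewrite mulf_neq0.
move=> y; rewrite inE; apply/existsP/isotropic_productsP.
  case=> w /and3P [w_neq0 /eqP ww /eqP wMw]; move: w_neq0 ww wMw.
  rewrite (decomp w); set s := _ / al; set t := _ / al => w_neq0 ww wMw.
  have iso : s ^+ q * s + t ^+ q * t = 0.
    by apply/eqP; move/eqP: ww; rewrite hww mulf_eq0 (negbTE norm_u) orbF.
  exists s, t; split=> //.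
    apply: contraNneq w_neq0 => s0.
    have /eqP t0 : t == 0 by rewrite -(isotropic_eq0 iso) s0.
    by rewrite s0 t0 !scale0r addr0.
  by rewrite -wMw hwMw iso mulr0 add0r; field; apply/andP.
case=> s [t [s_neq0 iso yE]]; exists (s *: u + t *: v); apply/and3P; split.
- apply: contra s_neq0 => /eqP/(congr1 (herm q u)).
  rewrite hermDr !hermZr huv herm0r mulr0 addr0 => /eqP.
  by rewrite mulf_eq0 (negbTE norm_u) orbF.
- by rewrite hww iso mul0r.
- rewrite hwMw iso mulr0 add0r -(divfK (mulf_neq0 a_neq0 norm_u) y) yE -/a -/al.
  by apply/eqP; ring.
Qed.

End ShearNumericalRange.

End HermitianPlane.

Theorem proposition2 (F : finFieldType) (q : nat)
  (hq : exists p k : nat, [/\ prime p, (0 < k)%N & q = (p ^ k)%N])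
  (hF : #|F| = (q ^ 2)%N)
  (M : 'M[F]_2) (c : F) (u : 'cV[F]_2)
  (huniq : forall a : F, is_eigenvalue M a <-> a = c)
  (hu0 : u != 0)
  (heig : forall v : 'cV[F]_2, M *m v = c *: v <-> exists a : F, v = a *: u)
  (hnorm : herm q u u != 0) :
  [/\ 0 \notin Num0 q M,
      ~~ odd q -> Num0 q M = [set x : F | x != 0]
    & odd q -> #|Num0 q M| = ((q ^ 2 - 1) %/ 2)%N].
Proof.
(* [hu0] is implied by [hnorm]. *)
have charFq : [pchar F].-nat q.
  have [p [k [p_pr _ qE]]] := hq.
  by rewrite qE; apply: (pnat_pchar_card k p_pr); rewrite hF qE -expnM.
have [k k_neq0 Num0E] := Num0_isotropic_products charFq hF huniq heig hnorm.
split.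
- by rewrite Num0E mul0r (isotropic_products_neq0 charFq).
- move=> q_even; apply/setP => y.
  rewrite Num0E (isotropic_products_even charFq hF q_even) !inE.
  by rewrite mulf_eq0 invr_eq0 (negbTE k_neq0) orbF.
- move=> q_odd; rewrite -(card_isotropic_products_odd charFq hF q_odd).
  rewrite -[RHS](card_preimset _ (mulIf (invr_neq0 k_neq0))).
  by apply: eq_card => y; rewrite Num0E [RHS]inE.
Qed.
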